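(* The variety $\mathfrak B$ of all bicommutative algebras is generated by its free algebra of rank one, $F_1(\mathfrak B)$; that is, every polynomial identity satisfied by $F_1(\mathfrak B)$ holds in all bicommutative algebras.
   Context: $K$ is a field of characteristic $0$. A bicommutative algebra is a (nonassociative) $K$-algebra satisfying $(x_1x_2)x_3=(x_1x_3)x_2$ and $x_1(x_2x_3)=x_2(x_1x_3)$; $\mathfrak B$ is the variety of such algebras and $F_1(\mathfrak B)$ its relatively free algebra on one generator. *)

From HB Require Import structures.
From mathcomp Require Import all_boot all_order all_algebra.
Set Implicit Arguments. Unset Strict Implicit. Unset Printing Implicit Defensive.
Import GRing.Theory.
Local Open Scope ring_scope.

(* Nonassociative polynomials (without constant term) over K in the
   countably many variables x_0, x_1, ...: formal expressions built from
   variables, 0, +, scalar multiplication and the (nonassociative) product. *)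
Inductive naterm (K : Type) : Type :=
  | NVar of nat
  | NZero
  | NAdd of naterm K & naterm K
  | NScale of K & naterm K
  | NMul of naterm K & naterm K.

Arguments NVar {K}.
Arguments NZero {K}.

Section Eval.
Variables (K : fieldType) (V : lmodType K) (mul : V -> V -> V).

Fixpoint naeval (e : nat -> V) (t : naterm K) : V :=
  match t with
  | NVar i => e i
  | NZero => 0
  | NAdd t1 t2 => naeval e t1 + naeval e t2
  | NScale c t1 => c *: naeval e t1
  | NMul t1 t2 => mul (naeval e t1) (naeval e t2)
  end.

Definition is_bicommutative_algebra : Prop :=
  [/\ forall (a : K) (x y z : V), mul (a *: x + y) z = a *: mul x z + mul y z,
      forall (a : K) (x y z : V), mul x (a *: y + z) = a *: mul x y + mul x z,
      forall x1 x2 x3 : V, mul (mul x1 x2) x3 = mul (mul x1 x3) x2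
    & forall x1 x2 x3 : V, mul x1 (mul x2 x3) = mul x2 (mul x1 x3)].

Definition is_identity_of (f : naterm K) : Prop :=
  forall e : nat -> V, naeval e f = 0.
End Eval.

Definition identity_of_B (K : fieldType) (f : naterm K) : Prop :=
  forall (V : lmodType K) (mul : V -> V -> V),
    is_bicommutative_algebra mul -> is_identity_of mul f.

Fixpoint nasubst (K : Type) (g : nat -> naterm K) (t : naterm K) : naterm K :=
  match t with
  | NVar i => g i
  | NZero => NZero
  | NAdd t1 t2 => NAdd (nasubst g t1) (nasubst g t2)
  | NScale c t1 => NScale c (nasubst g t1)
  | NMul t1 t2 => NMul (nasubst g t1) (nasubst g t2)
  end.

(* The relatively free algebra F_1(B) = K{x} / (T(B) ∩ K{x}): its elements
   are classes of polynomials in the single variable x = x_0. *)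
Definition F1B_elem (K : Type) := naterm K.
Definition is_one_var (K : Type) (t : naterm K) : Prop :=
  nasubst (fun _ => NVar 0) t = t.
Definition F1B_zero (K : fieldType) (t : F1B_elem K) : Prop := identity_of_B t.

(* f is an identity of F_1(B): for all elements [g_i] of F_1(B)
   (g_i one-variable polynomials), f([g_0], [g_1], ...) = [f(g_0, g_1, ...)]
   is zero in F_1(B). *)
Definition identity_of_F1B (K : fieldType) (f : naterm K) : Prop :=
  forall g : nat -> F1B_elem K,
    (forall i, is_one_var (g i)) -> F1B_zero (nasubst g f).

(* Let e_0, e_1, ... be elements of a bicommutative algebra.  Left multiplications by the
   e_i and right multiplications by the e_j pairwise commute on products, since
   x (u y) = (x u) y whenever u is a product.  Hence a product of values of nonassociative
   polynomials at e is obtained from some e_i e_j by applying a commutative monomial in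
   letters a_i ("multiply by e_i on the left") and b_j ("multiply by e_j on the right").
   So every nonassociative polynomial t has a normal form sum_k l_k x_k + P(a, b), in which
   every monomial of P contains an a-letter and a b-letter; it does not depend on the
   algebra and determines the value of t at e.

   In the three-dimensional bicommutative algebra with product
   u v = (u_1 + u_3) (v_2 + v_3) e_3, the elements c_i x + k_i x^2 of F_1(B) evaluated at
   x = (1, 2, 0) are u_i = (c_i, 2 c_i, 2 k_i), and t(u) = sum_k l_k u_k + P(c + 2k, 2c + 2k) e_3.
   If f is an identity of F_1(B), this vanishes for all c and k; hence l = 0 and P vanishes
   everywhere, so P = 0 because K is infinite, and f is an identity of every bicommutative
   algebra. *)

From HB Require Import structures.
From mathcomp Require Import all_boot all_order all_algebra.
From mathcomp Require Import mpoly zify ring.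
Set Implicit Arguments. Unset Strict Implicit. Unset Printing Implicit Defensive.
Import GRing.Theory.
Local Open Scope ring_scope.

(** * Nonassociative polynomials *)

Lemma naeval_subst (K : fieldType) (V : lmodType K) (mul : V -> V -> V) e g (t : naterm K) :
  naeval mul e (nasubst g t) = naeval mul (fun i => naeval mul e (g i)) t.
Proof. by elim: t => [i||a IHa b IHb|c a IHa|a IHa b IHb] /=; rewrite ?IHa ?IHb. Qed.

Lemma eq_naeval (K : fieldType) (V : lmodType K) (mul : V -> V -> V) e1 e2 (t : naterm K) :
  e1 =1 e2 -> naeval mul e1 t = naeval mul e2 t.
Proof. by move=> eq_e; elim: t => [i||a IHa b IHb|c a IHa|a IHa b IHb] /=; rewrite ?IHa ?IHb. Qed.

Fixpoint vars_lt (K : Type) (n : nat) (t : naterm K) : bool :=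
  match t with
  | NVar i => (i < n)%N
  | NZero => true
  | NAdd a b | NMul a b => vars_lt n a && vars_lt n b
  | NScale _ a => vars_lt n a
  end.

Fixpoint var_bound (K : Type) (t : naterm K) : nat :=
  match t with
  | NVar i => i
  | NZero => 0
  | NAdd a b | NMul a b => maxn (var_bound a) (var_bound b)
  | NScale _ a => var_bound a
  end.

Lemma vars_lt_mono (K : Type) n n' (t : naterm K) :
  (n <= n')%N -> vars_lt n t -> vars_lt n' t.
Proof.
move=> le_nn'; elim: t => [i||a IHa b IHb|c a IHa|a IHa b IHb] //=.
- by move=> /leq_trans; apply.
- by case/andP => /IHa -> /IHb ->.
- by case/andP => /IHa -> /IHb ->.
Qed.

Lemma vars_lt_bound (K : Type) (t : naterm K) : vars_lt (var_bound t).+1 t.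
Proof.
elim: t => //= [a IHa b IHb|a IHa b IHb]; apply/andP; split;
  by apply: vars_lt_mono; last eassumption; rewrite ltnS ?leq_maxl ?leq_maxr.
Qed.

(** * Polynomials vanishing on K^N *)

Section VanishingPolynomials.
Variable K : fieldType.
Hypothesis K_pchar0 : [pchar K] =i pred0.

Lemma natr_inj_pchar0 : injective (fun n : nat => n%:R : K).
Proof.
move=> m n /= eq_mn; wlog le_mn : m n eq_mn / (m <= n)%N.
  by move=> W; case: (leqP m n) => [|/ltnW] ?; [|symmetry]; apply: W.
have: ((n - m)%:R : K) == 0 by rewrite natrB // eq_mn subrr.
by rewrite ((pcharf0P K).1 K_pchar0) subn_eq0 => le_nm; apply/eqP; rewrite eqn_leq le_mn.
Qed.

Lemma poly_eq0_of_vanishing (p : {poly K}) : (forall x, p.[x] = 0) -> p = 0.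
Proof.
move=> p0; apply: (@roots_geq_poly_eq0 _ _ [seq i%:R | i <- iota 0 (size p)]).
- by apply/allP => x _; apply/rootP.
- by rewrite map_inj_uniq ?iota_uniq //; apply: natr_inj_pchar0.
- by rewrite size_map size_iota.
Qed.

Lemma mpoly_rmorph_eq (N : nat) (S : comNzRingType) (f g : {rmorphism {mpoly K[N]} -> S}) :
  (forall c, f c%:MP = g c%:MP) -> (forall i, f 'X_i = g 'X_i) -> f =1 g.
Proof.
move=> fgC fgX p; rewrite [p]mpolyE !rmorph_sum; apply: eq_bigr => m _.
by rewrite -mul_mpolyC mpolyXE_id !rmorphM !rmorph_prod fgC; congr (_ * _);
  apply: eq_bigr => i _; rewrite !rmorphXn fgX.
Qed.

Lemma muniX_lift (N : nat) (i : 'I_N) :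
  muni ('X_(lift ord_max i) : {mpoly K[N.+1]}) = ('X_i)%:P.
Proof.
rewrite /muni mmapX mmap1U; case: splitP => j /=; rewrite /bump leqNgt ltn_ord add0n.
  by move=> eq_ij; congr ('X__)%:P; apply/val_inj.
by move=> eq_iN; have := ltn_ord i; rewrite eq_iN ltnNge leq_addr.
Qed.

Lemma muniX_max (N : nat) : muni ('X_ord_max : {mpoly K[N.+1]}) = 'X.
Proof.
rewrite /muni mmapX mmap1U; case: splitP => [j /= eq_jN|//].
by have := ltn_ord j; rewrite -eq_jN ltnn.
Qed.

Lemma rmorph_muniE (N : nat) (S : comNzRingType)
    (phi : {rmorphism {mpoly K[N]} -> S}) (psi : {rmorphism {mpoly K[N.+1]} -> S}) :
  (forall c, psi c%:MP = phi c%:MP) -> (forall i, psi 'X_(lift ord_max i) = phi 'X_i) ->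
  forall p, psi p = (map_poly phi (muni p)).[psi 'X_ord_max].
Proof.
move=> psiC psiX; apply: (@mpoly_rmorph_eq _ _ psi
  (horner_eval (psi 'X_ord_max) \o map_poly phi \o @muni _ _)) => [c|i] /=.
  by rewrite horner_evalE muniC map_polyC hornerC psiC.
rewrite horner_evalE; case: (unliftP ord_max i) => [j ->|->].
  by rewrite muniX_lift map_polyC hornerC psiX.
by rewrite muniX_max map_polyX hornerX.
Qed.

Lemma muni_inj (N : nat) : injective (@muni N K).
Proof.
apply: (can_inj (g := fun q => (map_poly (@mwiden _ _) q).['X_ord_max])) => p.
rewrite -[RHS]/(idfun p) [RHS](@rmorph_muniE _ _ (@mwiden _ _) idfun) //= => [c|i].
  by rewrite mwidenC.
by rewrite mwidenX mnmwiden1; congr 'X__; apply/val_inj; rewrite /= /bump leqNgt ltn_ord.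
Qed.

Lemma mpoly_eq0_of_vanishing (N : nat) (p : {mpoly K[N]}) :
  (forall v, p.@[v] = 0) -> p = 0.
Proof.
elim: N p => [|N IH] p p0.
  have p_const : p = (p@_0%MM)%:MP.
    apply/mpolyP => m; rewrite mcoeffC.
    have -> : m = 0%MM by apply/mnmP => -[].
    by rewrite eqxx mulr1.
  by have := p0 (fun=> 0); rewrite p_const mevalC => ->; rewrite mpolyC0.
apply: muni_inj; rewrite muni0; apply/polyP => k; rewrite coef0; apply: IH => w.
pose v x (i : 'I_N.+1) := if unlift ord_max i is Some j then w j else x.
have vanish_w : map_poly (meval w) (muni p) = 0.
  apply: poly_eq0_of_vanishing => x.
  rewrite -(p0 (v x)) [RHS](@rmorph_muniE _ _ (meval w) (meval (v x))) => [|c|i].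
  - by rewrite /= mevalXU /v unlift_none.
  - by rewrite /= !mevalC.
  - by rewrite /= !mevalXU /v liftK.
by move/polyP/(_ k): vanish_w; rewrite coef_map coef0.
Qed.
End VanishingPolynomials.

Lemma addmU_eq (N : nat) (k k' : 'I_N) (m1 m2 : 'X_{1..N}) : k != k' ->
  (U_(k) + m1 = U_(k') + m2)%MM -> exists r, m1 = (U_(k') + r)%MM /\ m2 = (U_(k) + r)%MM.
Proof.
move=> neq_kk' /mnmP eq_m; exists (m1 - U_(k'))%MM; split; apply/mnmP => x;
  move: (eq_m x) (eq_m k'); rewrite !mnmDE !mnmBE !mnm1E eqxx (negbTE neq_kk');
  by case: (eqVneq k' x) => [<-|_]; rewrite ?(negbTE neq_kk') /=; lia.
Qed.

Lemma sum_delta_scale (R : pzRingType) (V : lmodType R) (n i : nat) (F : nat -> V) :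
  (i < n)%N -> \sum_(k < n) ((k : nat) == i)%:R *: F k = F i.
Proof.
move=> lt_in; rewrite (bigD1 (Ordinal lt_in)) //= eqxx scale1r big1 ?addr0 // => k.
by rewrite -val_eqE /= => /negbTE->; rewrite scale0r.
Qed.

(** * Normal forms *)

Section Letters.
Variable n : nat.
Local Notation N := (n + n)%N.

(* The variables of {mpoly K[n + n]}: lvar i is the letter a_i and rvar j the letter b_j. *)

Definition lvar (i : 'I_n) : 'I_N := lshift n i.
Definition rvar (j : 'I_n) : 'I_N := rshift n j.

Lemma split_lvar i : split (lvar i) = inl i. Proof. exact: (unsplitK (inl i)). Qed.
Lemma split_rvar j : split (rvar j) = inr j. Proof. exact: (unsplitK (inr j)). Qed.

Lemma lvar_inj : injective lvar. Proof. exact: lshift_inj. Qed.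
Lemma rvar_inj : injective rvar. Proof. exact: rshift_inj. Qed.
Lemma lvar_neq_rvar i j : (lvar i == rvar j) = false.
Proof. exact: eq_lrshift. Qed.

Definition letters (m : 'X_{1..N}) : seq 'I_N :=
  flatten [seq nseq (m k) k | k <- enum 'I_N].

Lemma count_letters P m : count P (letters m) = (\sum_(k <- enum 'I_N) P k * m k)%N.
Proof.
rewrite /letters count_flatten sumnE !big_map; apply: eq_bigr => k _.
by rewrite count_nseq.
Qed.

Lemma letters0 : letters 0%MM = [::].
Proof.
apply/perm_nilP/permP => P; rewrite count_letters big1 // => k _.
by rewrite mnm0E muln0.
Qed.

Lemma perm_lettersD m1 m2 : perm_eq (letters (m1 + m2)%MM) (letters m1 ++ letters m2).
Proof.
apply/permP => P; rewrite count_cat !count_letters -big_split /=.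
by apply: eq_bigr => k _; rewrite mnmDE mulnDr.
Qed.

Lemma perm_lettersU k m : perm_eq (letters (U_(k) + m)%MM) (k :: letters m).
Proof.
rewrite (permPl (perm_lettersD _ _)) -cat1s perm_cat2r; apply/permP => P.
rewrite count_letters /= addn0 (bigD1_seq k) ?mem_enum ?enum_uniq //= mnm1E eqxx muln1.
by rewrite big1 ?addn0 // => k' /negbTE; rewrite mnm1E eq_sym => ->; rewrite muln0.
Qed.

Definition mixed (m : 'X_{1..N}) := exists i j m', m = (U_(lvar i) + U_(rvar j) + m')%MM.

End Letters.

Section NormalForm.
Variables (K : fieldType) (n : nat).
Local Notation N := (n + n)%N.
Implicit Types (P Q : {mpoly K[N]}) (S : pred 'I_N).

Definition in_var_ideal S P :=
  forall m : 'X_{1..N}, [forall (k | S k), m k == 0%N] -> P@_m = 0.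

Lemma in_var_ideal0 S : in_var_ideal S 0.
Proof. by move=> m _; rewrite mcoeff0. Qed.

Lemma in_var_idealD S P Q : in_var_ideal S P -> in_var_ideal S Q -> in_var_ideal S (P + Q).
Proof. by move=> IP IQ m m0; rewrite mcoeffD IP ?IQ ?addr0. Qed.

Lemma in_var_idealZ S c P : in_var_ideal S P -> in_var_ideal S (c *: P).
Proof. by move=> IP m m0; rewrite mcoeffZ IP ?mulr0. Qed.

Lemma in_var_idealMr S P Q : in_var_ideal S P -> in_var_ideal S (P * Q).
Proof.
move=> IP m /forall_inP m0; rewrite mcoeffM big1 // => -[m1 m2] /eqP /= def_m.
rewrite IP ?mul0r //; apply/forall_inP => k /m0/eqP.
by move/mnmP/(_ k): def_m; rewrite mnmDE => -> /eqP; rewrite addn_eq0 => /andP[].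
Qed.

Lemma in_var_idealMl S P Q : in_var_ideal S Q -> in_var_ideal S (P * Q).
Proof. by rewrite mulrC; apply: in_var_idealMr. Qed.

Lemma in_var_idealX S k : S k -> in_var_ideal S 'X_k.
Proof.
move=> Sk m /forall_inP/(_ k Sk)/eqP mk0; rewrite mcoeffX.
by case: eqP => // def_m; rewrite -def_m mnm1E eqxx in mk0.
Qed.

Definition is_lvar (k : 'I_N) := (k < n)%N.

Definition mixed_poly P := in_var_ideal is_lvar P /\ in_var_ideal (predC is_lvar) P.

Lemma mixed_of_msupp P m : mixed_poly P -> m \in msupp P -> mixed m.
Proof.
move=> [IlP IrP]; rewrite mcoeff_msupp => nz_m.
have /existsP[k] : ~~ [forall (k | is_lvar k), m k == 0%N].
  by apply: contra nz_m => /IlP ->.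
have /existsP[k'] : ~~ [forall (k | ~~ is_lvar k), m k == 0%N].
  by apply: contra nz_m => /IrP ->.
rewrite !negb_imply => /andP[lk' mk'] /andP[lk mk].
have [i def_k] : exists i, k = lvar i by exists (Ordinal lk); apply/val_inj.
have [j def_k'] : exists j, k' = rvar j.
  case: (splitP k') => j def_k'; first by rewrite /is_lvar def_k' ltn_ord in lk'.
  by exists j; apply/val_inj.
exists i, j, (m - U_(lvar i) - U_(rvar j))%MM; apply/mnmP => x.
rewrite !mnmDE !mnmBE !mnm1E; move: mk mk'; rewrite def_k def_k'.
case: (eqVneq (lvar i) x) => [<-|_]; first by rewrite [rvar _ == _]eq_sym lvar_neq_rvar /=; lia.
by case: (eqVneq (rvar j) x) => [<-|_] /=; lia.
Qed.

Definition lpoly (l : 'I_n -> K) : {mpoly K[N]} := \sum_k l k *: 'X_(lvar k).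
Definition rpoly (l : 'I_n -> K) : {mpoly K[N]} := \sum_k l k *: 'X_(rvar k).

Lemma lpoly_in_var_ideal l : in_var_ideal is_lvar (lpoly l).
Proof.
apply: big_ind => [|P Q|k _]; [exact: in_var_ideal0|exact: in_var_idealD|].
by apply/in_var_idealZ/in_var_idealX; rewrite /is_lvar /= ltn_ord.
Qed.

Lemma rpoly_in_var_ideal l : in_var_ideal (predC is_lvar) (rpoly l).
Proof.
apply: big_ind => [|P Q|k _]; [exact: in_var_ideal0|exact: in_var_idealD|].
by apply/in_var_idealZ/in_var_idealX; rewrite /= /is_lvar /= -leqNgt leq_addr.
Qed.

Definition nform_type := (('I_n -> K) * {mpoly K[N]})%type.

(* A normal form (l, P) stands for sum_k l_k x_k + P(a, b); as a left (resp. right)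
   factor of a product its linear part turns into a-letters (resp. b-letters). *)
Definition lpart (X : nform_type) := lpoly X.1 + X.2.
Definition rpart (X : nform_type) := rpoly X.1 + X.2.

Fixpoint nform (t : naterm K) : nform_type :=
  match t with
  | NVar i => (fun k : 'I_n => ((k : nat) == i)%:R, 0)
  | NZero => (fun _ => 0, 0)
  | NAdd a b => (fun k => (nform a).1 k + (nform b).1 k, (nform a).2 + (nform b).2)
  | NScale c a => (fun k => c * (nform a).1 k, c *: (nform a).2)
  | NMul a b => (fun _ => 0, lpart (nform a) * rpart (nform b))
  end.

Lemma nform_mixed t : mixed_poly (nform t).2.
Proof.
elim: t => [i||a [la ra] b [lb rb]|c a [la ra]|a [la ra] b [lb rb]] /=.
- by split; apply: in_var_ideal0.
- by split; apply: in_var_ideal0.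
- by split; apply: in_var_idealD.
- by split; apply: in_var_idealZ.
split; first by apply/in_var_idealMr/in_var_idealD => //; apply: lpoly_in_var_ideal.
by apply/in_var_idealMl/in_var_idealD => //; apply: rpoly_in_var_ideal.
Qed.

End NormalForm.

(** * Values in a bicommutative algebra *)

Section BicommutativeAlgebra.
Variables (K : fieldType) (V : lmodType K) (mul : V -> V -> V).
Hypothesis mulP : is_bicommutative_algebra mul.

Lemma bmulAC x y z : mul (mul x y) z = mul (mul x z) y.
Proof. by case: mulP. Qed.

Lemma bmulCA x y z : mul x (mul y z) = mul y (mul x z).
Proof. by case: mulP. Qed.

Lemma bmulDl x y z : mul (x + y) z = mul x z + mul y z.
Proof. by case: mulP => linl _ _ _; have := linl 1 x y z; rewrite !scale1r. Qed.

Lemma bmulDr x y z : mul x (y + z) = mul x y + mul x z.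
Proof. by case: mulP => _ linr _ _; have := linr 1 x y z; rewrite !scale1r. Qed.

Lemma bmul0l z : mul 0 z = 0.
Proof. by apply: (addrI (mul 0 z)); rewrite addr0 -bmulDl addr0. Qed.

Lemma bmul0r z : mul z 0 = 0.
Proof. by apply: (addrI (mul z 0)); rewrite addr0 -bmulDr addr0. Qed.

Lemma bmulZl a x z : mul (a *: x) z = a *: mul x z.
Proof. by case: mulP => linl _ _ _; have := linl a x 0 z; rewrite !addr0 bmul0l addr0. Qed.

Lemma bmulZr a x z : mul z (a *: x) = a *: mul z x.
Proof. by case: mulP => _ linr _ _; have := linr a z x 0; rewrite !addr0 bmul0r addr0. Qed.

Lemma bmul_suml (I : Type) (r : seq I) (P : pred I) (F : I -> V) z :
  mul (\sum_(i <- r | P i) F i) z = \sum_(i <- r | P i) mul (F i) z.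
Proof. exact: (big_morph (mul^~ z) (fun x y => bmulDl x y z) (bmul0l z)). Qed.

Lemma bmul_sumr (I : Type) (r : seq I) (P : pred I) (F : I -> V) z :
  mul z (\sum_(i <- r | P i) F i) = \sum_(i <- r | P i) mul z (F i).
Proof. exact: (big_morph (mul z) (bmulDr z) (bmul0r z)). Qed.

Definition is_prod u := exists x y, u = mul x y.

Lemma bmulA_prod x u y : is_prod u -> mul x (mul u y) = mul (mul x u) y.
Proof. by case=> p [q ->]; rewrite bmulAC bmulCA [mul x (mul p q)]bmulCA bmulAC. Qed.

Lemma is_prod_mul x y : is_prod (mul x y).
Proof. by exists x, y. Qed.

Variables (n : nat) (e : nat -> V).
Local Notation N := (n + n)%N.

Definition mulop (k : 'I_N) (u : V) : V :=
  match split k with inl i => mul (e i) u | inr j => mul u (e j) end.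

Lemma mulop_lvar i u : mulop (lvar i) u = mul (e i) u.
Proof. by rewrite /mulop split_lvar. Qed.

Lemma mulop_rvar j u : mulop (rvar j) u = mul u (e j).
Proof. by rewrite /mulop split_rvar. Qed.

Lemma mulop_prod k u : is_prod (mulop k u).
Proof. by rewrite /mulop; case: split => i; apply: is_prod_mul. Qed.

Lemma mulopC k k' u : is_prod u -> mulop k (mulop k' u) = mulop k' (mulop k u).
Proof.
move=> pu; rewrite /mulop; case: (split k) => i; case: (split k') => j.
- exact: bmulCA.
- by rewrite bmulA_prod.
- by rewrite bmulA_prod.
- exact: bmulAC.
Qed.

Lemma mulop_mull k u v : is_prod u -> mul (mulop k u) v = mulop k (mul u v).
Proof. by move=> pu; rewrite /mulop; case: split => i; [rewrite bmulA_prod | apply: bmulAC]. Qed.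

Lemma mulop_mulr k u v : is_prod v -> mul u (mulop k v) = mulop k (mul u v).
Proof. by move=> pv; rewrite /mulop; case: split => i; [apply: bmulCA | rewrite bmulA_prod]. Qed.

Definition mulops (s : seq 'I_N) (u : V) : V := foldr mulop u s.

Lemma mulops_prod s u : is_prod u -> is_prod (mulops s u).
Proof. by case: s => //= k s _; apply: mulop_prod. Qed.

Lemma mulop_mulops k s u : is_prod u -> mulop k (mulops s u) = mulops s (mulop k u).
Proof.
move=> pu; elim: s => //= k' s IH.
by rewrite mulopC ?IH //; apply: mulops_prod.
Qed.

Lemma mulops_cat s t u : mulops (s ++ t) u = mulops s (mulops t u).
Proof. exact: foldr_cat. Qed.

Lemma mulops_rem k s u : is_prod u -> k \in s -> mulops s u = mulop k (mulops (rem k s) u).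
Proof.
move=> pu; elim: s => //= k' s IH; rewrite inE.
case: (eqVneq k' k) => [-> //|_] /= ks.
by rewrite IH // mulopC //; apply: mulops_prod.
Qed.

Lemma perm_mulops s t u : is_prod u -> perm_eq s t -> mulops s u = mulops t u.
Proof.
move=> pu; elim: s t => [|k s IH] t pst.
  by move: pst; rewrite perm_sym => /perm_nilP ->.
have kt : k \in t by rewrite -(perm_mem pst) mem_head.
rewrite (mulops_rem pu kt) /=; congr (mulop k _); apply: IH.
by rewrite -(perm_cons k) (permPl pst) perm_to_rem.
Qed.

Lemma mulops_mull s u v : is_prod u -> mul (mulops s u) v = mulops s (mul u v).
Proof.
move=> pu; elim: s => //= k s IH.
by rewrite mulop_mull ?IH //; apply: mulops_prod.
Qed.

Lemma mulops_mulr s u v : is_prod v -> mul u (mulops s v) = mulops s (mul u v).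
Proof.
move=> pv; elim: s => //= k s IH.
by rewrite mulop_mulr ?IH //; apply: mulops_prod.
Qed.

Definition word (i j : 'I_n) (m : 'X_{1..N}) : V := mulops (letters m) (mul (e i) (e j)).

Lemma word0 i j : word i j 0%MM = mul (e i) (e j).
Proof. by rewrite /word letters0. Qed.

Lemma wordU i j k m : word i j (U_(k) + m)%MM = mulop k (word i j m).
Proof. by rewrite /word (perm_mulops _ (perm_lettersU k m)) //; apply: is_prod_mul. Qed.

Lemma wordD i j m1 m2 : word i j (m1 + m2)%MM = mulops (letters m1) (word i j m2).
Proof.
by rewrite /word (perm_mulops _ (perm_lettersD m1 m2)) ?mulops_cat //; apply: is_prod_mul.
Qed.

Lemma word_lvar_swap i i' j m : word i j (U_(lvar i') + m)%MM = word i' j (U_(lvar i) + m)%MM.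
Proof. by rewrite !wordU /word !mulop_mulops; [rewrite !mulop_lvar bmulCA | apply: is_prod_mul..]. Qed.

Lemma word_rvar_swap i j j' m : word i j (U_(rvar j') + m)%MM = word i j' (U_(rvar j) + m)%MM.
Proof. by rewrite !wordU /word !mulop_mulops; [rewrite !mulop_rvar bmulAC | apply: is_prod_mul..]. Qed.

Lemma word_rvar_eq i j j' m1 m2 :
  (U_(rvar j) + m1 = U_(rvar j') + m2)%MM -> word i j m1 = word i j' m2.
Proof.
case: (eqVneq j j') => [<- /addmI -> //|neq_jj'].
have /addmU_eq eq_m : rvar j != rvar j' by rewrite (inj_eq (@rvar_inj _)).
by case/eq_m => r [-> ->]; apply: word_rvar_swap.
Qed.

Lemma word_eq i j i' j' m1 m2 :
  (U_(lvar i) + U_(rvar j) + m1 = U_(lvar i') + U_(rvar j') + m2)%MM ->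
  word i j m1 = word i' j' m2.
Proof.
rewrite -!addmA; case: (eqVneq i i') => [<- /addmI|neq_ii']; first exact: word_rvar_eq.
have /addmU_eq eq_m : lvar i != lvar i' by rewrite (inj_eq (@lvar_inj _)).
case/eq_m => r [eq_r1 eq_r2].
have /addmU_eq/(_ eq_r1)[r' [def_m1 def_r]] : rvar j != lvar i'.
  by rewrite eq_sym lvar_neq_rvar.
rewrite def_m1 word_lvar_swap; apply: word_rvar_eq.
by rewrite eq_r2 def_r !addmA [(U_(rvar j) + _)%MM]addmC.
Qed.

(* Well defined by word_eq; the junk value 0 on monomials that are not mixed is never used. *)
Definition mval (m : 'X_{1..N}) : V :=
  if [pick ij : 'I_n * 'I_n | (U_(lvar ij.1) + U_(rvar ij.2) <= m)%MM] is Some (i, j)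
  then word i j (m - (U_(lvar i) + U_(rvar j)))%MM else 0.

Lemma mvalE i j m : mval (U_(lvar i) + U_(rvar j) + m)%MM = word i j m.
Proof.
rewrite /mval; case: pickP => [[i' j'] /= le_m|]; last by move/(_ (i, j)); rewrite /= lem_addr.
by apply: word_eq; rewrite addmC submK.
Qed.

Lemma mval_lvar_rvar i j : mval (U_(lvar i) + U_(rvar j))%MM = mul (e i) (e j).
Proof. by rewrite -[(_ + _)%MM]addm0 mvalE word0. Qed.

Lemma mval_lvar k m : mixed m -> mval (U_(lvar k) + m)%MM = mul (e k) (mval m).
Proof.
case=> i [j [m' ->]]; rewrite mvalE -mulop_lvar -wordU -mvalE; congr mval.
by apply/mnmP => x; rewrite !mnmDE; lia.
Qed.

Lemma mval_rvar k m : mixed m -> mval (m + U_(rvar k))%MM = mul (mval m) (e k).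
Proof.
case=> i [j [m' ->]]; rewrite mvalE -mulop_rvar -wordU -mvalE; congr mval.
by apply/mnmP => x; rewrite !mnmDE; lia.
Qed.

Lemma mvalD m1 m2 : mixed m1 -> mixed m2 -> mval (m1 + m2)%MM = mul (mval m1) (mval m2).
Proof.
case=> i1 [j1 [r1 ->]] [i2 [j2 [r2 ->]]].
have -> : (U_(lvar i1) + U_(rvar j1) + r1 + (U_(lvar i2) + U_(rvar j2) + r2))%MM =
    (U_(lvar i1) + U_(rvar j1) + (r1 + (r2 + (U_(lvar i2) + (U_(rvar j2) + 0)))))%MM.
  by apply/mnmP => x; rewrite !mnmDE mnm0E; lia.
rewrite !mvalE wordD wordD !wordU word0 mulop_lvar mulop_rvar bmulCA /word.
by rewrite mulops_mull ?mulops_mulr //; apply: is_prod_mul.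
Qed.

Definition pval (P : {mpoly K[N]}) : V := \sum_(m <- msupp P) P@_m *: mval m.

Lemma pval_supp P s : uniq s -> {subset msupp P <= s} -> pval P = \sum_(m <- s) P@_m *: mval m.
Proof.
move=> uniq_s le_Ps; rewrite (bigID (mem (msupp P))) /= [X in _ + X]big1 ?addr0; last first.
  by move=> m /memN_msupp_eq0 ->; rewrite scale0r.
rewrite -big_filter; apply/perm_big/uniq_perm; rewrite ?msupp_uniq ?filter_uniq // => m.
by rewrite mem_filter andb_idr //; apply: le_Ps.
Qed.

Lemma pval_is_linear : linear pval.
Proof.
move=> a P Q; pose s := undup (msupp P ++ msupp Q ++ msupp (a *: P + Q)).
rewrite !(@pval_supp _ s) ?undup_uniq //.
- rewrite scaler_sumr -big_split; apply: eq_bigr => m _.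
  by rewrite mcoeffD mcoeffZ scalerDl scalerA.
all: by move=> m; rewrite mem_undup !mem_cat => ->; rewrite ?orbT.
Qed.

HB.instance Definition _ := GRing.isLinear.Build K {mpoly K[N]} V *:%R pval pval_is_linear.

Lemma pvalX m : pval 'X_[m] = mval m.
Proof. by rewrite /pval msuppX big_seq1 mcoeffX eqxx scale1r. Qed.

Lemma pvalM P Q : mixed_poly P -> mixed_poly Q -> pval (P * Q) = mul (pval P) (pval Q).
Proof.
move=> mP mQ; rewrite mpolyME big_allpairs linear_sum [pval P]/pval bmul_suml.
rewrite big_seq [RHS]big_seq; apply: eq_bigr => m Pm.
rewrite linear_sum [pval Q]/pval bmulZl bmul_sumr scaler_sumr big_seq [RHS]big_seq.
apply: eq_bigr => m' Qm'; rewrite linearZ /= pvalX bmulZr scalerA mvalD //.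
- exact: mixed_of_msupp Pm.
- exact: mixed_of_msupp Qm'.
Qed.

Lemma pval_lvarM k Q : mixed_poly Q -> pval ('X_(lvar k) * Q) = mul (e k) (pval Q).
Proof.
move=> mQ; rewrite {1}[Q]mpolyE mulr_sumr linear_sum [pval Q]/pval bmul_sumr.
rewrite big_seq [RHS]big_seq; apply: eq_bigr => m Qm.
rewrite -scalerAr linearZ -mpolyXD /= pvalX bmulZr mval_lvar //; exact: mixed_of_msupp Qm.
Qed.

Lemma pval_Mrvar k P : mixed_poly P -> pval (P * 'X_(rvar k)) = mul (pval P) (e k).
Proof.
move=> mP; rewrite {1}[P]mpolyE mulr_suml linear_sum [pval P]/pval bmul_suml.
rewrite big_seq [RHS]big_seq; apply: eq_bigr => m Pm.
rewrite -scalerAl linearZ -mpolyXD /= pvalX bmulZl mval_rvar //; exact: mixed_of_msupp Pm.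
Qed.

Lemma pval_lvarMrvar i j : pval ('X_(lvar i) * 'X_(rvar j)) = mul (e i) (e j).
Proof. by rewrite -mpolyXD pvalX mval_lvar_rvar. Qed.

Definition ecomb (l : 'I_n -> K) : V := \sum_k l k *: e k.

Lemma pval_lpolyM l Q : mixed_poly Q -> pval (lpoly l * Q) = mul (ecomb l) (pval Q).
Proof.
move=> mQ; rewrite mulr_suml linear_sum bmul_suml; apply: eq_bigr => k _.
by rewrite -scalerAl linearZ /= pval_lvarM // bmulZl.
Qed.

Lemma pval_Mrpoly l P : mixed_poly P -> pval (P * rpoly l) = mul (pval P) (ecomb l).
Proof.
move=> mP; rewrite mulr_sumr linear_sum bmul_sumr; apply: eq_bigr => k _.
by rewrite -scalerAr linearZ /= pval_Mrvar // bmulZr.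
Qed.

Lemma pval_lpolyMrpoly l l' : pval (lpoly l * rpoly l') = mul (ecomb l) (ecomb l').
Proof.
rewrite mulr_suml linear_sum bmul_suml; apply: eq_bigr => k _.
rewrite mulr_sumr linear_sum bmulZl bmul_sumr scaler_sumr; apply: eq_bigr => k' _.
by rewrite -scalerAl -scalerAr !linearZ /= pval_lvarMrvar bmulZr scalerA.
Qed.

Definition nform_val (X : nform_type K n) : V := ecomb X.1 + pval X.2.

Lemma pval_lpartMrpart X Y : mixed_poly X.2 -> mixed_poly Y.2 ->
  pval (lpart X * rpart Y) = mul (nform_val X) (nform_val Y).
Proof.
move=> mX mY; rewrite mulrDl !mulrDr !linearD /= pval_lpolyMrpoly pval_lpolyM //.
by rewrite pval_Mrpoly // pvalM // bmulDl !bmulDr !addrA.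
Qed.

Lemma naeval_nform t : vars_lt n t -> naeval mul e t = nform_val (nform n t).
Proof.
elim: t => [i||a IHa b IHb|c a IHa|a IHa b IHb] /=.
- by move=> lt_in; rewrite /nform_val /ecomb linear0 addr0 sum_delta_scale.
- by rewrite /nform_val /ecomb linear0 addr0 big1 // => k _; rewrite scale0r.
- case/andP => va vb; rewrite IHa // IHb // /nform_val /ecomb linearD addrACA -big_split /=.
  by congr (_ + _); apply: eq_bigr => k _; rewrite scalerDl.
- move=> va; rewrite IHa // /nform_val /ecomb linearZ scalerDr scaler_sumr; congr (_ + _).
  by apply: eq_bigr => k _; rewrite scalerA.
case/andP => va vb; rewrite IHa // IHb // -pval_lpartMrpart; try exact: nform_mixed.
by rewrite /nform_val /ecomb big1 ?add0r // => k _; rewrite scale0r.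
Qed.

End BicommutativeAlgebra.

(** * The probe algebra *)

Lemma scale_regularE (R : pzRingType) (a : R) (x : R^o) : a *: x = a * x.
Proof. by []. Qed.

Section ProbeAlgebra.
Variable K : fieldType.
Local Notation probe := (K^o * K^o * K^o)%type.

Definition lweight (u : probe) : K := u.1.1 + u.2.
Definition rweight (u : probe) : K := u.1.2 + u.2.
Definition e3 : probe := (0, 0, 1).

(* Both weights of a product u v equal lweight u * rweight v, which makes probe_mul
   bicommutative and lets the probe read off the polynomial part of a normal form. *)
Definition probe_mul (u v : probe) : probe := (lweight u * rweight v) *: e3.

Lemma lweightD : {morph lweight : u v / u + v}.
Proof. by move=> u v; rewrite /lweight /= addrACA. Qed.

Lemma rweightD : {morph rweight : u v / u + v}.
Proof. by move=> u v; rewrite /rweight /= addrACA. Qed.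

Lemma lweightZ a u : lweight (a *: u) = a * lweight u.
Proof. by rewrite /lweight /= mulrDr. Qed.

Lemma rweightZ a u : rweight (a *: u) = a * rweight u.
Proof. by rewrite /rweight /= mulrDr. Qed.

Lemma lweight_e3 : lweight e3 = 1. Proof. by rewrite /lweight /= add0r. Qed.
Lemma rweight_e3 : rweight e3 = 1. Proof. by rewrite /rweight /= add0r. Qed.

Lemma probe_mul_bicommutative : is_bicommutative_algebra probe_mul.
Proof.
rewrite /probe_mul; split=> [a x y z|a x y z|x y z|x y z].
- by rewrite lweightD lweightZ scalerA -scalerDl mulrDl mulrA.
- by rewrite rweightD rweightZ scalerA -scalerDl mulrDr mulrCA.
- by rewrite !lweightZ lweight_e3 !mulr1 mulrAC.
- by rewrite !rweightZ rweight_e3 !mulr1 mulrCA.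
Qed.

Variable n : nat.

Definition weights (e' : nat -> probe) (k : 'I_(n + n)) : K :=
  match split k with inl i => lweight (e' i) | inr j => rweight (e' j) end.

Section Value.
Variables (e' : nat -> probe) (X : nform_type K n).

Definition probe_val : probe := \sum_k X.1 k *: e' k + X.2.@[weights e'] *: e3.

Lemma lweight_probe_val : lweight probe_val = (lpart X).@[weights e'].
Proof.
rewrite /probe_val lweightD lweightZ lweight_e3 mulr1 mevalD; congr (_ + _).
rewrite (big_morph lweight lweightD (_ : lweight 0 = 0)); last by rewrite /lweight addr0.
rewrite /lpoly rmorph_sum; apply: eq_bigr => k _ /=.
by rewrite lweightZ mevalZ mevalXU /weights split_lvar.
Qed.

Lemma rweight_probe_val : rweight probe_val = (rpart X).@[weights e'].
Proof.
rewrite /probe_val rweightD rweightZ rweight_e3 mulr1 mevalD; congr (_ + _).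
rewrite (big_morph rweight rweightD (_ : rweight 0 = 0)); last by rewrite /rweight addr0.
rewrite /rpoly rmorph_sum; apply: eq_bigr => k _ /=.
by rewrite rweightZ mevalZ mevalXU /weights split_rvar.
Qed.

End Value.

Lemma naeval_probe e' t : vars_lt n t -> naeval probe_mul e' t = probe_val e' (nform n t).
Proof.
elim: t => [i||a IHa b IHb|c a IHa|a IHa b IHb] /=; rewrite /probe_val.
- by move=> lt_in; rewrite meval0 scale0r addr0 sum_delta_scale.
- by rewrite meval0 scale0r addr0 big1 // => k _; rewrite scale0r.
- case/andP => va vb; rewrite IHa // IHb // mevalD scalerDl addrACA -big_split /=.
  by congr (_ + _); apply: eq_bigr => k _; rewrite scalerDl.
- move=> va; rewrite IHa // mevalZ -scalerA scalerDr scaler_sumr; congr (_ + _).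
  by apply: eq_bigr => k _; rewrite scalerA.
case/andP => va vb; rewrite IHa // IHb // big1 ?add0r => [|k _]; last by rewrite scale0r.
by rewrite /probe_mul lweight_probe_val rweight_probe_val mevalM.
Qed.

End ProbeAlgebra.

(** * Identities of F_1(B) *)

Section IdentitiesOfF1B.
Variables (K : fieldType) (f : naterm K).
Hypothesis K_pchar0 : [pchar K] =i pred0.
Hypothesis f_F1B : identity_of_F1B f.
Local Notation probe := (K^o * K^o * K^o)%type.

Lemma F1B_identity_probe (c k : nat -> K) :
  naeval (@probe_mul K) (fun i => ((c i, 2 * c i, 2 * k i) : probe)) f = 0.
Proof.
(* x := (1, 2, 0) has x x = 2 e3, so c_i x + k_i x^2 evaluates to (c_i, 2 c_i, 2 k_i). *)
pose g i : naterm K := NAdd (NScale (c i) (NVar 0)) (NScale (k i) (NMul (NVar 0) (NVar 0))).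
have := f_F1B (g := g) (fun=> erefl) (probe_mul_bicommutative K) (fun=> ((1, 2, 0) : probe)).
rewrite naeval_subst => <-; apply: eq_naeval => i.
by rewrite /= /probe_mul /lweight /rweight; congr (_, _, _); rewrite /= ?scale_regularE; ring.
Qed.

Variable n : nat.
Hypothesis f_lt : vars_lt n f.

Lemma nform_linear_eq0 k : (nform n f).1 k = 0.
Proof.
have := F1B_identity_probe (fun i => (i == k)%:R) (fun=> 0).
rewrite (naeval_probe _ f_lt) => /(congr1 (fun u : probe => u.1.1)).
rewrite /probe_val /= scaler0 addr0 (big_morph (fun u : probe => u.1.1) (fun u v => erefl) erefl).
rewrite (bigD1 k) //= eqxx scale_regularE mulr1 big1 ?addr0 // => j.
by rewrite -val_eqE scale_regularE => /negbTE->; rewrite mulr0.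
Qed.

Lemma nform_poly_eq0 : (nform n f).2 = 0.
Proof.
apply: (mpoly_eq0_of_vanishing K_pchar0) => v.
pose w i : K * K := if insub i is Some j then (v (lvar j), v (rvar j)) else (0, 0).
(* Solve c + 2 k = v a_i and 2 c + 2 k = v b_i. *)
pose c i := (w i).2 - (w i).1; pose k i := (2 * (w i).1 - (w i).2) / 2.
have := F1B_identity_probe c k.
rewrite (naeval_probe _ f_lt) => /(congr1 (fun u : probe => u.2)).
rewrite /probe_val big1 ?add0r => [/= |j _]; last by rewrite nform_linear_eq0 scale0r.
rewrite scale_regularE mulr1 => <-; apply: meval_eq => x; rewrite /weights /lweight /rweight.
have two_neq0 : (2 : K) != 0 by rewrite ((pcharf0P K).1 K_pchar0).
case: (splitP x) => j def_x; rewrite /c /k /w valK /=.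
- have -> : x = lvar j by apply/val_inj.
  by field.
- have -> : x = rvar j by apply/val_inj.
  by field.
Qed.

End IdentitiesOfF1B.

Theorem corollary4p5 (K : fieldType) (hK : [pchar K]%R =i pred0) (f : naterm K) :
  identity_of_F1B f -> identity_of_B f.
Proof.
move=> f_F1B V mul mulP e.
have f_lt := vars_lt_bound f.
rewrite (naeval_nform mulP e f_lt) /nform_val (nform_poly_eq0 hK f_F1B f_lt) linear0 addr0.
by rewrite /ecomb big1 // => k _; rewrite (nform_linear_eq0 f_F1B f_lt) scale0r.
Qed.
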